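(* Let $0<q<1$. Then \[ \sum_{n=0}^{\infty}\frac{(1+q^{2n+1})\,q^{n}}{(1-q^{2n+1})^{2}}=\frac{\pi_{q}^{2}}{(1-q^{2})^{2}q^{1/2}}. \]
   Context: Let $0<q<1$. With $(z;q)_\infty=\prod_{k\ge0}(1-zq^k)$, Gosper's $q$-pi is $\pi_q=(1-q^2)q^{1/4}\frac{(q^2;q^2)_\infty^2}{(q;q^2)_\infty^2}$. *)

From Stdlib Require Import Reals.
Open Scope R_scope.

Fixpoint qpoch_fin (z q : R) (N : nat) : R :=
  match N with
  | O => 1
  | S n => qpoch_fin z q n * (1 - z * q ^ n)
  end.

Definition is_qpoch_inf (z q P : R) : Prop :=
  Un_cv (fun N => qpoch_fin z q N) P.

(* Gosper's q-pi, given the values A = (q^2;q^2)_inf and B = (q;q^2)_inf. *)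
Definition gosper_pi_q (q A B : R) : R :=
  (1 - q ^ 2) * Rpower q (1/4) * (A ^ 2 / B ^ 2).

(* Write X = q^(2n) and let F_n(k) be the k-th summand times
     (q^(2n+3); q^2)_k / (q^(2n+4); q^2)_k  *  q^k (q^(-2n); q^2)_k / (q^(1-2n); q^2)_k.
   The last factor vanishes for k > n, so S_n = sum_k F_n(k) terminates, and creative
   telescoping yields a rational certificate G with
     F_(n+1)(k) - rho(q^(2n)) F_n(k) = G_n(k+1) - G_n(k).
   Summing over k gives S_(n+1) = rho(q^(2n)) S_n, so S_n is an explicit quotient of finite
   q-Pochhammer products, tending to ((q^2; q^2)_oo / (q; q^2)_oo)^4, which is the right-hand
   side.  As n -> oo, F_n(k) tends to the k-th summand, and |F_n(k)| <= C q^k uniformly since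
   the truncating factor is a quotient of two terms of the increasing sequence
   (q^2; q^2)_m / (q; q^2)_m; Tannery's theorem passes to the limit. *)

From Stdlib Require Import Reals Lra Lia Psatz.
Open Scope R_scope.

(** * Sequences and series *)

Lemma Un_cv_const (c : R) : Un_cv (fun _ => c) c.
Proof.
  intros eps Heps; exists O; intros n _.
  unfold Rdist; rewrite Rminus_diag, Rabs_R0; lra.
Qed.

Lemma Un_cv_succ (u : nat -> R) (l : R) : Un_cv u l -> Un_cv (fun n => u (S n)) l.
Proof.
  intros Hu; apply (Un_cv_ext (fun n => u (n + 1)%nat)).
  - intros n; f_equal; lia.
  - exact (CV_shift' u 1 l Hu).
Qed.

Lemma Un_cv_inv (u : nat -> R) (l : R) :
  Un_cv u l -> l <> 0 -> Un_cv (fun n => / u n) (/ l).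
Proof.
  intros Hu Hl; apply (continuity_seq Rinv); [|exact Hu].
  change Rinv with (/ id)%F.
  apply continuity_pt_inv; [apply derivable_continuous_pt, derivable_pt_id | exact Hl].
Qed.

Lemma Un_cv_div (u v : nat -> R) (l m : R) :
  Un_cv u l -> Un_cv v m -> m <> 0 -> Un_cv (fun n => u n / v n) (l / m).
Proof. intros Hu Hv Hm; apply CV_mult; [exact Hu | exact (Un_cv_inv v m Hv Hm)]. Qed.

Lemma Un_cv_pow (u : nat -> R) (l : R) (m : nat) :
  Un_cv u l -> Un_cv (fun n => u n ^ m) (l ^ m).
Proof.
  intros Hu; induction m as [|m IH]; [exact (Un_cv_const 1)|].
  exact (CV_mult _ _ _ _ Hu IH).
Qed.

Lemma Un_cv_geometric (r : R) : 0 <= r < 1 -> Un_cv (pow r) 0.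
Proof.
  intros Hr eps Heps.
  destruct (pow_lt_1_zero r) with eps as [N HN]; [rewrite Rabs_right; lra | exact Heps |].
  exists N; intros n Hn; unfold Rdist; rewrite Rminus_0_r; exact (HN n Hn).
Qed.

Lemma Un_cv_affine_ratio (x : nat -> R) (a b c d : R) :
  Un_cv x 0 -> c <> 0 -> Un_cv (fun n => (a + b * x n) / (c + d * x n)) (a / c).
Proof.
  intros Hx Hc.
  assert (Haff : forall e f, Un_cv (fun n => e + f * x n) e).
  { intros e f. pattern e at 2; replace e with (e + f * 0) by ring.
    apply CV_plus; [apply Un_cv_const | apply CV_mult; [apply Un_cv_const | exact Hx]]. }
  exact (Un_cv_div _ _ a c (Haff a b) (Haff c d) Hc).
Qed.

Lemma pow_le_1 (b : R) (n : nat) : 0 <= b <= 1 -> b ^ n <= 1.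
Proof. intros Hb; rewrite <- (pow1 n); apply pow_incr; exact Hb. Qed.

Lemma pow_decr (q : R) (m n : nat) : 0 < q < 1 -> (m < n)%nat -> q ^ n < q ^ m.
Proof.
  intros Hq Hmn.
  replace n with (m + (n - m))%nat by lia; rewrite pow_add.
  pose proof (pow_lt q m (proj1 Hq)).
  assert (q ^ (n - m) < 1) by (apply pow_lt_1_compat; [lra | lia]).
  nra.
Qed.

Lemma pow_inj_lt1 (q : R) (m n : nat) : 0 < q < 1 -> q ^ m = q ^ n -> m = n.
Proof.
  intros Hq Heq; destruct (Nat.lt_total m n) as [H|[H|H]]; [| exact H |];
    pose proof (pow_decr q _ _ Hq H); lra.
Qed.

Lemma sum_f_R0_telescoping (h G : nat -> R) (m : nat) :
  (forall k, (k <= m)%nat -> h k = G (S k) - G k) -> sum_f_R0 h m = G (S m) - G O.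
Proof.
  induction m as [|m IH]; intros H; simpl.
  - apply H; lia.
  - rewrite IH by (intros; apply H; lia); rewrite (H (S m)) by lia; ring.
Qed.

Lemma sum_f_R0_tail_geometric (h : nat -> R) (C r : R) (K n : nat) :
  0 < r < 1 -> (forall k, Rabs (h k) <= C * r ^ k) -> (K <= n)%nat ->
  Rabs (sum_f_R0 h n - sum_f_R0 h K) <= C * r ^ S K / (1 - r).
Proof.
  intros Hr Hh HKn.
  assert (Hgen : forall m, Rabs (sum_f_R0 h (K + m) - sum_f_R0 h K)
                           <= C * (r ^ S K - r ^ S (K + m)) / (1 - r)).
  { induction m as [|m IH].
    - rewrite Nat.add_0_r, !Rminus_diag, Rabs_R0; unfold Rdiv; lra.
    - replace (K + S m)%nat with (S (K + m)) by lia; simpl sum_f_R0.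
      replace (sum_f_R0 h (K + m) + h (S (K + m)) - sum_f_R0 h K)
        with ((sum_f_R0 h (K + m) - sum_f_R0 h K) + h (S (K + m))) by ring.
      eapply Rle_trans; [apply Rabs_triang|].
      replace (C * (r ^ S K - r ^ S (S (K + m))) / (1 - r))
        with (C * (r ^ S K - r ^ S (K + m)) / (1 - r) + C * r ^ S (K + m))
        by (simpl; field; lra).
      specialize (Hh (S (K + m))); lra. }
  replace n with (K + (n - K))%nat by lia.
  eapply Rle_trans; [apply Hgen|].
  assert (0 <= C).
  { specialize (Hh O); simpl in Hh; pose proof (Rabs_pos (h O)); lra. }
  assert (0 < r ^ S (K + (n - K))) by (apply pow_lt; lra).
  unfold Rdiv; apply Rmult_le_compat_r; [apply Rlt_le, Rinv_0_lt_compat; lra | nra].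
Qed.

Theorem tannery_geometric (f : nat -> nat -> R) (g : nat -> R) (C r l : R) :
  0 < r < 1 -> (forall n k, Rabs (f n k) <= C * r ^ k) ->
  (forall k, Un_cv (fun n => f n k) (g k)) ->
  Un_cv (fun n => sum_f_R0 (f n) n) l -> infinite_sum g l.
Proof.
  intros Hr Hf Hfg Hl.
  assert (Hg : forall k, Rabs (g k) <= C * r ^ k).
  { intros k; exact (Rle_cv_lim (fun n => Hf n k) (cv_cvabs _ _ (Hfg k)) (Un_cv_const _)). }
  set (d n k := f n k - g k).
  assert (Hd : forall n k, Rabs (d n k) <= 2 * C * r ^ k).
  { intros n k; unfold d, Rminus; eapply Rle_trans; [apply Rabs_triang|].
    rewrite Rabs_Ropp; specialize (Hf n k); specialize (Hg k); lra. }
  assert (Hdiag : Un_cv (fun n => sum_f_R0 (d n) n) 0).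
  { intros eps Heps.
    assert (Htail : Un_cv (fun K => 2 * C * r / (1 - r) * r ^ K) 0).
    { rewrite <- (Rmult_0_r (2 * C * r / (1 - r))).
      apply CV_mult; [apply Un_cv_const | apply Un_cv_geometric; lra]. }
    destruct (Htail (eps / 2)) as [K HK]; [lra|]; specialize (HK K (le_n K)).
    assert (Hhead : Un_cv (fun n => sum_f_R0 (d n) K) 0).
    { assert (Hdk : forall k, Un_cv (fun n => d n k) 0).
      { intros k; rewrite <- (Rminus_diag (g k)).
        apply CV_minus; [apply Hfg | apply Un_cv_const]. }
      clear HK; induction K as [|K IH]; simpl; [apply Hdk|].
      rewrite <- (Rplus_0_r 0); exact (CV_plus _ _ _ _ IH (Hdk (S K))). }
    destruct (Hhead (eps / 2)) as [N HN]; [lra|].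
    exists (Nat.max K N); intros n Hn.
    specialize (HN n ltac:(lia)).
    pose proof (sum_f_R0_tail_geometric (d n) (2 * C) r K n Hr (Hd n) ltac:(lia)) as Hrest.
    unfold Rdist in *; rewrite Rminus_0_r in *.
    replace (2 * C * r ^ S K / (1 - r)) with (2 * C * r / (1 - r) * r ^ K) in Hrest
      by (simpl; field; lra).
    replace (sum_f_R0 (d n) n)
      with (sum_f_R0 (d n) K + (sum_f_R0 (d n) n - sum_f_R0 (d n) K)) by ring.
    eapply Rle_lt_trans; [apply Rabs_triang|].
    pose proof (Rle_abs (2 * C * r / (1 - r) * r ^ K)); lra. }
  apply (Un_cv_ext (fun n => sum_f_R0 (f n) n - sum_f_R0 (d n) n)).
  - intros n; unfold d; rewrite minus_sum; ring.
  - rewrite <- (Rminus_0_r l); exact (CV_minus _ _ _ _ Hl Hdiag).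
Qed.

(** * Positivity of q-Pochhammer products *)

Lemma exp_le_mono (x y : R) : x <= y -> exp x <= exp y.
Proof.
  intros [Hlt|Heq]; [left; exact (exp_increasing x y Hlt) | rewrite Heq; right; reflexivity].
Qed.

Lemma exp_le_one_minus (x : R) : 0 <= x < 1 -> exp (- (x / (1 - x))) <= 1 - x.
Proof.
  intros Hx.
  (* [1 + y <= exp y] at [y = x / (1 - x)], where [1 + y = / (1 - x)] *)
  pose proof (exp_ineq1_le (x / (1 - x))) as Hy.
  pose proof (exp_pos (x / (1 - x))).
  rewrite exp_Ropp; apply (Rmult_le_reg_r (exp (x / (1 - x)))); [lra|].
  rewrite Rinv_l by lra.
  replace 1 with ((1 - x) * (1 + x / (1 - x))) at 1 by (field; lra).
  apply Rmult_le_compat_l; lra.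
Qed.

Lemma qpoch_fin_ge_exp (z b : R) (n : nat) : 0 <= z < 1 -> 0 <= b < 1 ->
  exp (- (z / ((1 - z) * (1 - b)))) <= qpoch_fin z b n.
Proof.
  intros Hz Hb.
  assert (Hgen : forall n,
    exp (- (z / (1 - z) * ((1 - b ^ n) / (1 - b)))) <= qpoch_fin z b n).
  { clear n; induction n as [|n IH]; simpl qpoch_fin.
    - replace (z / (1 - z) * ((1 - b ^ 0) / (1 - b))) with 0 by (simpl; field; lra).
      rewrite Ropp_0, exp_0; lra.
    - pose proof (pow_le b n (proj1 Hb)).
      pose proof (pow_le_1 b n ltac:(lra)).
      replace (- (z / (1 - z) * ((1 - b ^ S n) / (1 - b))))
        with (- (z / (1 - z) * ((1 - b ^ n) / (1 - b))) + - (z * b ^ n / (1 - z)))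
        by (simpl; field; lra).
      rewrite exp_plus.
      apply Rmult_le_compat; try (left; apply exp_pos); [exact IH|].
      eapply Rle_trans; [|apply exp_le_one_minus; split; nra].
      apply exp_le_mono, Ropp_le_contravar.
      unfold Rdiv; apply Rmult_le_compat_l; [nra|].
      apply Rinv_le_contravar; nra. }
  eapply Rle_trans; [|apply Hgen].
  apply exp_le_mono, Ropp_le_contravar.
  pose proof (pow_le b n (proj1 Hb)).
  replace (z / ((1 - z) * (1 - b))) with (z / (1 - z) * (1 / (1 - b))) by (field; lra).
  apply Rmult_le_compat_l; [apply Rmult_le_pos; [lra | apply Rlt_le, Rinv_0_lt_compat; lra]|].
  unfold Rdiv; apply Rmult_le_compat_r; [apply Rlt_le, Rinv_0_lt_compat|]; lra.
Qed.

Lemma is_qpoch_inf_pos (z b P : R) : 0 <= z < 1 -> 0 <= b < 1 ->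
  is_qpoch_inf z b P -> 0 < P.
Proof.
  intros Hz Hb HP.
  eapply Rlt_le_trans; [apply (exp_pos (- (z / ((1 - z) * (1 - b)))))|].
  exact (Rle_cv_lim (fun n => qpoch_fin_ge_exp z b n Hz Hb) (Un_cv_const _) HP).
Qed.

Lemma qpoch_fin_pos (z b : R) (n : nat) : 0 <= z < 1 -> 0 <= b < 1 -> 0 < qpoch_fin z b n.
Proof.
  intros Hz Hb; eapply Rlt_le_trans; [apply exp_pos | exact (qpoch_fin_ge_exp z b n Hz Hb)].
Qed.

(** * The WZ pair *)

Definition summand (q : R) (k : nat) : R :=
  (1 + q ^ (2 * k + 1)) * q ^ k / (1 - q ^ (2 * k + 1)) ^ 2.

(* Throughout, [X] stands for q^(2n) and [u] for q^(2k). *)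
Fixpoint damping (q X : R) (k : nat) : R :=
  match k with
  | O => 1
  | S j => damping q X j * ((1 - q^3 * X * (q^2)^j) / (1 - q^4 * X * (q^2)^j))
  end.

Fixpoint truncation (q X : R) (k : nat) : R :=
  match k with
  | O => 1
  | S j => truncation q X j * (q * (X - (q^2)^j) / (X - q * (q^2)^j))
  end.

Definition fin_term (q X : R) (k : nat) : R :=
  summand q k * damping q X k * truncation q X k.

Definition fin_sum (q : R) (n : nat) : R := sum_f_R0 (fin_term q ((q^2)^n)) n.

Definition fin_prod (q : R) (n : nat) : R :=
  qpoch_fin (q^2) (q^2) (S n) * qpoch_fin (q^2) (q^2) n ^ 3
  / (qpoch_fin q (q^2) (S n) ^ 3 * qpoch_fin q (q^2) n).

Definition summand_kernel (q u : R) : R := (1 + q * u) / (1 - q * u) ^ 2.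

Definition term_ratio (q X u : R) : R :=
  summand_kernel q (q^2 * u) / summand_kernel q u * (1 - q^3 * X * u) / (1 - q^4 * X * u)
  * (q^2 * (X - u) / (X - q * u)).

Definition term_ratio_reduced (q X u : R) : R :=
  summand_kernel q (q^2 * u) / summand_kernel q u * (1 - q^3 * X * u) / (1 - q^4 * X * u)
  * q^2 / (1 - q * u / X).

Definition level_factor (q X u : R) : R :=
  (1 - / (X * q^2)) * (1 - q^3 * X * u) * (1 - q^4 * X) * (1 - u / (X * q))
  / ((1 - q^3 * X) * (1 - q^4 * X * u) * (1 - / (X * q))).

Definition sum_ratio (q X : R) : R :=
  (1 - q^4 * X) * (1 - q^2 * X)^3 / ((1 - q^3 * X)^3 * (1 - q * X)).

(* Numerator of the rational certificate G_n(k) / F_n(k), see [cert_closed_form]. *)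
Definition cert_num (q X u : R) : R :=
  ( (X^2*q^3 - X^3*q^7 - X^4*q^8 + X^5*q^12)
  + (- X*q^2 - X^2*q^3 - 2*X^2*q^4 + X^2*q^6 + 2*X^3*q^7 + 2*X^3*q^8 + X^4*q^8
     + 2*X^4*q^9 - X^4*q^11 - X^5*q^12 - 2*X^5*q^13) * u
  + (X*q^2 + 2*X*q^3 + 2*X^2*q^4 + X^2*q^5 - X^2*q^6 - 2*X^2*q^7 - X^3*q^7 - 4*X^3*q^8
     - X^3*q^9 - 2*X^4*q^9 - X^4*q^10 + X^4*q^11 + 2*X^4*q^12 + 2*X^5*q^13 + X^5*q^14) * u^2
  + (- 2*X*q^3 - X*q^4 - X^2*q^5 + 2*X^2*q^7 + X^2*q^8 + 2*X^3*q^8 + 2*X^3*q^9 + X^4*q^10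
     - 2*X^4*q^12 - X^4*q^13 - X^5*q^14) * u^3
  + (X*q^4 - X^2*q^8 - X^3*q^9 + X^4*q^13) * u^4 )
  / ((1 - q * X) * (1 - q^3 * X)^4).

(* G_n(k+1) is expressed through F_n(k), so that it keeps its value at k = n + 1,
   where F_n vanishes. *)
Definition cert (q X : R) (k : nat) : R :=
  match k with
  | O => 0
  | S j => - fin_term q X j * term_ratio_reduced q X ((q^2)^j) * cert_num q X (q^2 * (q^2)^j)
           / (X * q^4 * (q^2)^j * (1 + q^3 * (q^2)^j))
  end.

Lemma prod_unit_le (a b : R) : 0 < a <= 1 -> 0 < b <= 1 -> 0 < a * b <= 1.
Proof. intros; split; nra. Qed.
Lemma prod_unit_lt_l (a b : R) : 0 < a < 1 -> 0 < b <= 1 -> 0 < a * b < 1.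
Proof. intros; split; nra. Qed.
Lemma prod_unit_lt_r (a b : R) : 0 < a <= 1 -> 0 < b < 1 -> 0 < a * b < 1.
Proof. intros; split; nra. Qed.

Ltac unit_le := first [ apply prod_unit_le; unit_le | split; lra ].
Ltac unit_lt := first [ split; lra
                      | apply prod_unit_lt_l; [unit_lt | unit_le]
                      | apply prod_unit_lt_r; [unit_le | unit_lt] ].

(* Never fails: side conditions it cannot close are left to the caller. *)
Ltac nonzero_factor :=
  match goal with
  | |- 1 - ?e <> 0 => apply Rgt_not_eq; assert (0 < e < 1) by unit_lt; lra
  | |- 1 + ?e <> 0 => apply Rgt_not_eq; assert (0 < e < 1) by unit_lt; lra
  | |- ?e - 1 <> 0 => apply Rlt_not_eq; assert (0 < e < 1) by unit_lt; lra
  | |- ?e <> 0 => first [ assumption | apply Rgt_not_eq; lra | apply Rlt_not_eq; lra | idtac ]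
  end.

Ltac q_powers q :=
  assert (0 < q^2 < 1) by (split; nra);
  assert (0 < q^3 < 1) by (split; simpl; nra);
  assert (0 < q^4 < 1) by (split; simpl; nra).

Lemma one_minus_div_neq0 (a b : R) : b <> 0 -> a <> b -> 1 - a / b <> 0.
Proof.
  intros Hb Hab Hc; apply Hab.
  replace a with (a / b * b) by (field; exact Hb); replace (a / b) with 1 by lra; ring.
Qed.

Lemma one_minus_inv_neq0 (a : R) : 0 < a < 1 -> 1 - / a <> 0.
Proof.
  intros Ha; assert (1 < / a) by (rewrite <- Rinv_1; apply Rinv_lt_contravar; lra); lra.
Qed.

Section Certificate.
Variables q X u : R.
Hypotheses (Hq : 0 < q < 1) (HX : 0 < X <= 1) (Hu : 0 < u <= 1).

Lemma level_factor_one : level_factor q X 1 = 1 - 1 / (X * q^2).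
Proof.
  q_powers q. unfold level_factor. field. repeat split; nonzero_factor.
Qed.

Lemma term_ratio_reduced_spec :
  X - q * u <> 0 -> term_ratio_reduced q X u * (1 - u / X) = term_ratio q X u.
Proof.
  intros H. q_powers q. unfold term_ratio, term_ratio_reduced, summand_kernel.
  field. repeat split; nonzero_factor.
Qed.

Lemma level_factor_neq0 : X * q - u <> 0 -> level_factor q X u <> 0.
Proof.
  intros H1. q_powers q.
  assert (0 < X * q^2 < 1) by unit_lt; assert (0 < X * q < 1) by unit_lt.
  unfold level_factor.
  apply Rmult_integral_contrapositive_currified; [|apply Rinv_neq_0_compat];
    repeat apply Rmult_integral_contrapositive_currified;
    first [ apply one_minus_inv_neq0; lra
          | apply one_minus_div_neq0; lra
          | nonzero_factor ].
Qed.

Lemma level_factor_step : X * q - u <> 0 -> X - q * u <> 0 ->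
  term_ratio q (q^2 * X) u * (1 - q^2 * u / (X * q^2)) * level_factor q X u
  = (1 - u / (X * q^2)) * term_ratio q X u * level_factor q X (q^2 * u).
Proof.
  intros H1 H2. q_powers q.
  unfold term_ratio, level_factor, summand_kernel. field. repeat split; nonzero_factor.
  replace (q^2 * X - q * u) with (q * (X * q - u)) by ring.
  apply Rmult_integral_contrapositive_currified; lra.
Qed.

Lemma cert_step : X * q - u <> 0 -> X - q * u <> 0 -> X * q^2 - u <> 0 ->
  level_factor q X u / (1 - u / (X * q^2)) - sum_ratio q X =
  - term_ratio_reduced q X u * cert_num q X (q^2 * u) / (X * q^4 * u * (1 + q^3 * u))
  + cert_num q X u / ((1 - u / (X * q^2)) * X * q^2 * u * (1 + q * u)).
Proof.
  intros H1 H2 H3. q_powers q.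
  unfold level_factor, sum_ratio, term_ratio_reduced, cert_num, summand_kernel.
  field. repeat split; nonzero_factor.
Qed.

End Certificate.

Lemma cert_step_last (q X : R) : 0 < q < 1 -> 0 < X <= 1 ->
  term_ratio q (q^2 * X) X * level_factor q X X / (1 - X / (X * q^2))
  = term_ratio_reduced q X X * cert_num q X (q^2 * X) / (X * q^4 * X * (1 + q^3 * X)).
Proof.
  intros Hq HX. q_powers q.
  unfold term_ratio, level_factor, term_ratio_reduced, cert_num, summand_kernel.
  field. repeat split; nonzero_factor.
  replace (q^2 * X - q * X) with (q * X * (q - 1)) by ring.
  repeat apply Rmult_integral_contrapositive_currified; lra.
Qed.

Lemma cert_num_one (q X : R) : cert_num q X 1 = 0.
Proof. unfold cert_num, Rdiv. ring. Qed.

(** * The terminating identity *)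

Section FiniteIdentity.
Variable q : R.
Hypothesis Hq : 0 < q < 1.

Lemma pow2_succ (m : nat) : (q^2)^(S m) = q^2 * (q^2)^m.
Proof. reflexivity. Qed.

Lemma pow2_unit (m : nat) : 0 < (q^2)^m <= 1.
Proof.
  split; [apply pow_lt; nra | apply pow_le_1; split; nra].
Qed.

Lemma pow2_neq_odd (m k : nat) : (q^2)^m <> q * (q^2)^k.
Proof.
  intros Heq; rewrite <- !pow_mult in Heq.
  change (q * q ^ (2 * k)) with (q ^ S (2 * k)) in Heq.
  apply pow_inj_lt1 in Heq; [lia | exact Hq].
Qed.

Lemma summand_kernel_pos (u : R) : 0 < u <= 1 -> 0 < summand_kernel q u.
Proof.
  intros Hu; unfold summand_kernel; apply Rdiv_lt_0_compat; [nra | apply pow_lt; nra].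
Qed.

Lemma summand_eq_kernel (k : nat) : summand q k = summand_kernel q ((q^2)^k) * q ^ k.
Proof.
  unfold summand, summand_kernel; rewrite pow_add, pow_mult.
  replace ((q^2)^k * q^1) with (q * (q^2)^k) by ring; unfold Rdiv; ring.
Qed.

Lemma fin_term_0 (X : R) : fin_term q X 0 = summand_kernel q 1.
Proof. unfold fin_term; rewrite summand_eq_kernel; simpl; ring. Qed.

Lemma fin_term_succ (X : R) (k : nat) :
  fin_term q X (S k) = fin_term q X k * term_ratio q X ((q^2)^k).
Proof.
  unfold fin_term, term_ratio; rewrite !summand_eq_kernel; cbn [damping truncation].
  rewrite pow2_succ; change (q ^ S k) with (q * q ^ k).
  pose proof (summand_kernel_pos _ (pow2_unit k)).
  unfold Rdiv; set (a := / (1 - q^4 * X * (q^2)^k)); set (b := / (X - q * (q^2)^k)).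
  field; lra.
Qed.

Lemma pow2_mulq_sub_neq0 (n k : nat) : (q^2)^n * q - (q^2)^k <> 0.
Proof. intros H; apply (pow2_neq_odd k n); lra. Qed.

Lemma pow2_sub_qmul_neq0 (n k : nat) : (q^2)^n - q * (q^2)^k <> 0.
Proof. intros H; apply (pow2_neq_odd n k); lra. Qed.

Lemma fin_term_level (n k : nat) :
  fin_term q ((q^2)^(S n)) k * (1 - (q^2)^k / ((q^2)^n * q^2))
  = fin_term q ((q^2)^n) k * level_factor q ((q^2)^n) ((q^2)^k).
Proof.
  induction k as [|k IH].
  - change ((q^2)^0) with 1; rewrite !fin_term_0, level_factor_one;
      [reflexivity | exact Hq | apply pow2_unit].
  - rewrite !fin_term_succ, !pow2_succ; rewrite pow2_succ in IH.
    set (X := (q^2)^n) in *; set (u := (q^2)^k) in *.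
    pose proof (pow2_unit n) as HX; pose proof (pow2_unit k) as Hu.
    pose proof (pow2_mulq_sub_neq0 n k) as H1; pose proof (pow2_sub_qmul_neq0 n k) as H2.
    apply (Rmult_eq_reg_r (level_factor q X u)); [|exact (level_factor_neq0 q X u Hq HX Hu H1)].
    transitivity (fin_term q (q^2 * X) k
      * (term_ratio q (q^2 * X) u * (1 - q^2 * u / (X * q^2)) * level_factor q X u)); [ring|].
    rewrite level_factor_step by assumption.
    transitivity ((fin_term q (q^2 * X) k * (1 - u / (X * q^2)))
      * (term_ratio q X u * level_factor q X (q^2 * u))); [ring|].
    rewrite IH; ring.
Qed.

Lemma truncation_beyond (n k : nat) : (n < k)%nat -> truncation q ((q^2)^n) k = 0.
Proof.
  induction k as [|k IH]; intros Hk; [lia|]; cbn [truncation].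
  destruct (Nat.eq_dec k n) as [->|Hne].
  - rewrite Rminus_diag; unfold Rdiv; ring.
  - rewrite IH by lia; ring.
Qed.

Lemma fin_term_beyond (n k : nat) : (n < k)%nat -> fin_term q ((q^2)^n) k = 0.
Proof. intros Hk; unfold fin_term; rewrite truncation_beyond by exact Hk; ring. Qed.

Lemma cert_closed_form (n k : nat) : (k <= n)%nat ->
  let X := (q^2)^n in let u := (q^2)^k in
  cert q X k = - fin_term q X k * cert_num q X u
               / ((1 - u / (X * q^2)) * X * q^2 * u * (1 + q * u)).
Proof.
  intros Hk X u; subst X u; destruct k as [|j].
  - rewrite cert_num_one; simpl cert; unfold Rdiv; ring.
  - rewrite fin_term_succ, pow2_succ; cbn [cert].
    pose proof (pow2_unit n) as HX; pose proof (pow2_unit j) as Hv.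
    rewrite <- (term_ratio_reduced_spec q _ _ Hq HX Hv (pow2_sub_qmul_neq0 n j)).
    q_powers q.
    unfold term_ratio_reduced, summand_kernel. field. repeat split; try nonzero_factor.
    + exact (pow2_sub_qmul_neq0 n j).
    + assert ((q^2)^n < (q^2)^j) by (apply pow_decr; [split; nra | lia]); lra.
Qed.

Lemma pow2_level_lt (n k : nat) : (k <= n)%nat -> (q^2)^n * q^2 < (q^2)^k.
Proof.
  intros Hk; replace ((q^2)^n * q^2) with ((q^2)^(S n)) by (simpl; ring).
  apply pow_decr; [split; nra | lia].
Qed.

Lemma fin_term_level_div (n k : nat) : (k <= n)%nat ->
  let X := (q^2)^n in let u := (q^2)^k in
  fin_term q (q^2 * X) k = fin_term q X k * (level_factor q X u / (1 - u / (X * q^2))).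
Proof.
  intros Hk X u; subst X u.
  pose proof (pow2_unit n); pose proof (pow2_level_lt n k Hk).
  assert (Hq2 : 0 < q^2) by nra.
  assert (Hne : 1 - (q^2)^k / ((q^2)^n * q^2) <> 0).
  { apply one_minus_div_neq0; [apply Rgt_not_eq, Rmult_lt_0_compat|]; lra. }
  apply (Rmult_eq_reg_r (1 - (q^2)^k / ((q^2)^n * q^2))); [|exact Hne].
  rewrite <- pow2_succ, fin_term_level; field; repeat split; lra.
Qed.

Lemma telescoping_step (n k : nat) : (k <= n)%nat ->
  let X := (q^2)^n in
  fin_term q (q^2 * X) k - sum_ratio q X * fin_term q X k = cert q X (S k) - cert q X k.
Proof.
  intros Hk X; subst X.
  rewrite (fin_term_level_div n k Hk), (cert_closed_form n k Hk); cbn [cert].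
  pose proof (pow2_unit n); pose proof (pow2_unit k).
  assert (Hne : (q^2)^n * q^2 - (q^2)^k <> 0) by (pose proof (pow2_level_lt n k Hk); lra).
  transitivity (fin_term q ((q^2)^n) k * (level_factor q ((q^2)^n) ((q^2)^k)
    / (1 - (q^2)^k / ((q^2)^n * q^2)) - sum_ratio q ((q^2)^n))); [ring|].
  rewrite cert_step by auto using pow2_unit, pow2_mulq_sub_neq0, pow2_sub_qmul_neq0.
  unfold Rdiv; ring.
Qed.

Lemma telescoping_step_last (n : nat) :
  let X := (q^2)^n in
  fin_term q (q^2 * X) (S n) - sum_ratio q X * fin_term q X (S n)
  = cert q X (S (S n)) - cert q X (S n).
Proof.
  intros X; subst X; cbn [cert].
  rewrite (fin_term_beyond n (S n)) by lia.
  rewrite fin_term_succ, (fin_term_level_div n n) by lia.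
  transitivity (fin_term q ((q^2)^n) n * (term_ratio q (q^2 * (q^2)^n) ((q^2)^n)
    * level_factor q ((q^2)^n) ((q^2)^n) / (1 - (q^2)^n / ((q^2)^n * q^2))));
    [unfold Rdiv; ring|].
  rewrite cert_step_last by auto using pow2_unit.
  unfold Rdiv; ring.
Qed.

Lemma fin_sum_succ (n : nat) : fin_sum q (S n) = sum_ratio q ((q^2)^n) * fin_sum q n.
Proof.
  unfold fin_sum; rewrite pow2_succ.
  set (rho := sum_ratio q ((q^2)^n)); set (F := fin_term q ((q^2)^n)).
  assert (Htel : sum_f_R0 (fun k => fin_term q (q^2 * (q^2)^n) k - rho * F k) (S n)
                 = cert q ((q^2)^n) (S (S n)) - cert q ((q^2)^n) 0).
  { apply sum_f_R0_telescoping; intros k Hk.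
    destruct (Nat.eq_dec k (S n)) as [->|Hne];
      [apply telescoping_step_last | apply telescoping_step; lia]. }
  assert (Hscal : sum_f_R0 (fun k => rho * F k) (S n) = rho * sum_f_R0 F (S n)).
  { rewrite scal_sum; apply sum_eq; intros; ring. }
  rewrite minus_sum, Hscal in Htel; simpl sum_f_R0 at 2 in Htel; cbn [cert] in Htel.
  unfold F in *; rewrite (fin_term_beyond n (S n)) in Htel by lia.
  unfold Rdiv in Htel; rewrite Ropp_0, !Rmult_0_l in Htel; lra.
Qed.

Lemma fin_sum_eq_fin_prod (n : nat) : fin_sum q n = fin_prod q n.
Proof.
  assert (0 < q^2 < 1) by (split; nra).
  induction n as [|n IH].
  - unfold fin_sum, fin_prod; simpl sum_f_R0; rewrite fin_term_0.
    unfold summand_kernel; simpl qpoch_fin; field; lra.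
  - rewrite fin_sum_succ, IH; unfold fin_prod.
    cbn [qpoch_fin]; rewrite pow2_succ.
    pose proof (qpoch_fin_pos (q^2) (q^2) n ltac:(lra) ltac:(lra)).
    pose proof (qpoch_fin_pos q (q^2) n ltac:(lra) ltac:(lra)).
    pose proof (pow2_unit n); set (X := (q^2)^n) in *.
    q_powers q.
    unfold sum_ratio; field; repeat split; nonzero_factor.
Qed.
End FiniteIdentity.

(** * Passage to the limit *)

Definition qpoch_ratio (q : R) (m : nat) : R :=
  qpoch_fin (q^2) (q^2) m / qpoch_fin q (q^2) m.

Section Limits.
Variable q : R.
Hypothesis Hq : 0 < q < 1.

Lemma qpoch_ratio_succ (m : nat) :
  qpoch_ratio q (S m) = qpoch_ratio q m * ((1 - q^2 * (q^2)^m) / (1 - q * (q^2)^m)).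
Proof.
  unfold qpoch_ratio; cbn [qpoch_fin].
  assert (0 < q^2 < 1) by (split; nra).
  pose proof (qpoch_fin_pos q (q^2) m ltac:(lra) ltac:(lra)).
  pose proof (pow2_unit q Hq m); set (X := (q^2)^m) in *; clearbody X.
  field; split; [apply Rgt_not_eq; nra | lra].
Qed.

Lemma qpoch_ratio_pos (m : nat) : 0 < qpoch_ratio q m.
Proof.
  assert (0 < q^2 < 1) by (split; nra).
  apply Rdiv_lt_0_compat; apply qpoch_fin_pos; lra.
Qed.

Lemma qpoch_ratio_growing : Un_growing (qpoch_ratio q).
Proof.
  intros m; rewrite qpoch_ratio_succ; pose proof (qpoch_ratio_pos m).
  pose proof (pow2_unit q Hq m); set (X := (q^2)^m) in *; clearbody X.
  assert (1 <= (1 - q^2 * X) / (1 - q * X)).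
  { apply (Rmult_le_reg_r (1 - q * X)); [nra|].
    assert (q^2 * X <= q * X) by (apply Rmult_le_compat_r; nra).
    unfold Rdiv; rewrite Rmult_assoc, Rinv_l by (apply Rgt_not_eq; nra); lra. }
  nra.
Qed.

Lemma qpoch_ratio_ge_1 (m : nat) : 1 <= qpoch_ratio q m.
Proof.
  induction m as [|m IH]; [unfold qpoch_ratio; simpl; lra|].
  pose proof (qpoch_ratio_growing m); lra.
Qed.

Lemma truncation_qpoch_ratio (m k : nat) :
  truncation q ((q^2)^(m + k)) k = qpoch_ratio q (m + k) / qpoch_ratio q m.
Proof.
  revert m; induction k as [|k IH]; intros m.
  - rewrite Nat.add_0_r; pose proof (qpoch_ratio_pos m); simpl; field; lra.
  - cbn [truncation]; replace (m + S k)%nat with (S m + k)%nat by lia.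
    rewrite IH, (qpoch_ratio_succ m), pow_add, pow2_succ.
    pose proof (qpoch_ratio_pos m); pose proof (qpoch_ratio_pos (S m + k)).
    pose proof (pow2_unit q Hq m); pose proof (pow2_unit q Hq k).
    set (W := (q^2)^m) in *; set (u := (q^2)^k) in *.
    q_powers q.
    field; repeat split; try nonzero_factor.
    replace (q^2 * W * u - q * u) with (q * u * (q * W - 1)) by ring.
    apply Rmult_integral_contrapositive_currified; [apply Rgt_not_eq; nra | nonzero_factor].
Qed.

Lemma qpoch_ratio_cv (A B : R) : B <> 0 ->
  is_qpoch_inf (q^2) (q^2) A -> is_qpoch_inf q (q^2) B -> Un_cv (qpoch_ratio q) (A / B).
Proof. intros HB hA hB; exact (Un_cv_div _ _ A B hA hB HB). Qed.

Lemma truncation_bound (A B : R) (n k : nat) : B <> 0 ->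
  is_qpoch_inf (q^2) (q^2) A -> is_qpoch_inf q (q^2) B ->
  0 <= truncation q ((q^2)^n) k <= A / B.
Proof.
  intros HB hA hB.
  pose proof (growing_ineq _ _ qpoch_ratio_growing (qpoch_ratio_cv A B HB hA hB)) as Hsup.
  destruct (Nat.le_gt_cases k n) as [Hk|Hk].
  - replace n with (n - k + k)%nat by lia; rewrite truncation_qpoch_ratio.
    pose proof (qpoch_ratio_ge_1 (n - k)); pose proof (qpoch_ratio_pos (n - k + k)).
    specialize (Hsup (n - k + k)%nat); split.
    + apply Rlt_le, Rdiv_lt_0_compat; lra.
    + apply Rle_trans with (qpoch_ratio q (n - k + k)); [|exact Hsup].
      apply (Rmult_le_reg_r (qpoch_ratio q (n - k))); [lra|].
      unfold Rdiv; rewrite Rmult_assoc, Rinv_l by lra; nra.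
  - rewrite truncation_beyond by exact Hk.
    pose proof (qpoch_ratio_ge_1 O); specialize (Hsup O); lra.
Qed.

Lemma damping_unit (X : R) (k : nat) : 0 < X <= 1 -> 0 < damping q X k <= 1.
Proof.
  intros HX; induction k as [|k IH]; cbn [damping]; [lra|].
  pose proof (pow2_unit q Hq k); set (u := (q^2)^k) in *; clearbody u.
  q_powers q.
  assert (Hw : 0 < q^3 * X * u < 1) by unit_lt.
  assert (q^4 * X * u = q * (q^3 * X * u)) by ring.
  assert (0 < (1 - q^3 * X * u) / (1 - q^4 * X * u) <= 1).
  { split; [apply Rdiv_lt_0_compat; nra|].
    apply (Rmult_le_reg_r (1 - q^4 * X * u)); [nra|].
    unfold Rdiv; rewrite Rmult_assoc, Rinv_l by (apply Rgt_not_eq; nra); nra. }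
  split; nra.
Qed.

Lemma summand_kernel_le_at_1 (u : R) : 0 < u <= 1 -> summand_kernel q u <= summand_kernel q 1.
Proof.
  intros Hu; unfold summand_kernel; rewrite Rmult_1_r.
  assert (0 < (1 - q * u)^2) by (apply pow_lt; nra).
  assert (0 < (1 - q)^2) by (apply pow_lt; lra).
  apply (Rmult_le_reg_r ((1 - q * u)^2 * (1 - q)^2)); [nra|].
  replace ((1 + q * u) / (1 - q * u)^2 * ((1 - q * u)^2 * (1 - q)^2))
    with ((1 + q * u) * (1 - q)^2) by (field; nra).
  replace ((1 + q) / (1 - q)^2 * ((1 - q * u)^2 * (1 - q)^2))
    with ((1 + q) * (1 - q * u)^2) by (field; lra).
  (* the difference factors as [(q - q u) (3 - q - q u - q^2 u)] *)
  assert (0 <= (q - q * u) * (3 - q - q * u - q^2 * u)) by (apply Rmult_le_pos; nra).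
  nra.
Qed.

Lemma summand_bound (k : nat) : 0 < summand q k <= summand_kernel q 1 * q ^ k.
Proof.
  rewrite (summand_eq_kernel q k).
  pose proof (pow2_unit q Hq k); pose proof (pow_lt q k (proj1 Hq)).
  pose proof (summand_kernel_pos q Hq _ H); pose proof (summand_kernel_le_at_1 _ H).
  split; [nra | apply Rmult_le_compat_r; lra].
Qed.

Lemma fin_term_bound (A B : R) (n k : nat) : B <> 0 ->
  is_qpoch_inf (q^2) (q^2) A -> is_qpoch_inf q (q^2) B ->
  Rabs (fin_term q ((q^2)^n) k) <= summand_kernel q 1 * (A / B) * q ^ k.
Proof.
  intros HB hA hB; unfold fin_term.
  pose proof (summand_bound k) as Hs.
  pose proof (damping_unit ((q^2)^n) k (pow2_unit q Hq n)) as Hd.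
  pose proof (truncation_bound A B n k HB hA hB) as Ht.
  rewrite Rabs_right by (apply Rle_ge, Rmult_le_pos; [apply Rmult_le_pos|]; lra).
  replace (summand_kernel q 1 * (A / B) * q ^ k)
    with ((summand_kernel q 1 * q ^ k) * 1 * (A / B)) by ring.
  apply Rmult_le_compat; [apply Rmult_le_pos; lra | lra | apply Rmult_le_compat; lra | lra].
Qed.

Lemma damping_cv (k : nat) : Un_cv (fun n => damping q ((q^2)^n) k) 1.
Proof.
  induction k as [|k IH]; cbn [damping]; [apply Un_cv_const|].
  rewrite <- (Rmult_1_r 1); apply CV_mult; [exact IH|].
  set (u := (q^2)^k).
  pose proof (Un_cv_affine_ratio _ 1 (- (q^3 * u)) 1 (- (q^4 * u))
                (Un_cv_geometric (q^2) ltac:(split; nra)) R1_neq_R0) as H.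
  rewrite Rdiv_1_r in H; refine (Un_cv_ext _ _ _ 1 H).
  intros n; unfold Rdiv; f_equal; [ring | f_equal; ring].
Qed.

Lemma truncation_cv (k : nat) : Un_cv (fun n => truncation q ((q^2)^n) k) 1.
Proof.
  induction k as [|k IH]; cbn [truncation]; [apply Un_cv_const|].
  rewrite <- (Rmult_1_r 1); apply CV_mult; [exact IH|].
  pose proof (pow2_unit q Hq k); set (u := (q^2)^k) in *; clearbody u.
  assert (Hqu : - (q * u) <> 0) by (apply Rlt_not_eq; nra).
  pose proof (Un_cv_affine_ratio _ (- (q * u)) q (- (q * u)) 1
                (Un_cv_geometric (q^2) ltac:(split; nra)) Hqu) as Hlim.
  rewrite Rdiv_diag in Hlim by exact Hqu.
  refine (Un_cv_ext _ _ _ 1 Hlim).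
  intros n; unfold Rdiv; f_equal; [ring | f_equal; ring].
Qed.

Lemma fin_term_cv (k : nat) : Un_cv (fun n => fin_term q ((q^2)^n) k) (summand q k).
Proof.
  pose proof (CV_mult _ _ _ _ (CV_mult _ _ _ _ (Un_cv_const (summand q k)) (damping_cv k))
                (truncation_cv k)) as H.
  rewrite !Rmult_1_r in H; exact H.
Qed.

Lemma fin_prod_cv (A B : R) : B <> 0 ->
  is_qpoch_inf (q^2) (q^2) A -> is_qpoch_inf q (q^2) B -> Un_cv (fin_prod q) ((A / B) ^ 4).
Proof.
  intros HB hA hB.
  replace ((A / B) ^ 4) with (A * A ^ 3 / (B ^ 3 * B)) by (field; exact HB).
  apply Un_cv_div.
  - exact (CV_mult _ _ _ _ (Un_cv_succ _ _ hA) (Un_cv_pow _ _ 3 hA)).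
  - exact (CV_mult _ _ _ _ (Un_cv_pow _ _ 3 (Un_cv_succ _ _ hB)) hB).
  - apply Rmult_integral_contrapositive_currified; [apply pow_nonzero|]; exact HB.
Qed.

End Limits.

Lemma gosper_pi_q_sq (q A B : R) : 0 < q < 1 -> B <> 0 ->
  gosper_pi_q q A B ^ 2 / ((1 - q^2)^2 * Rpower q (1/2)) = (A / B) ^ 4.
Proof.
  intros Hq HB; unfold gosper_pi_q.
  assert (Hhalf : Rpower q (1/2) = Rpower q (1/4) ^ 2).
  { unfold Rpower; simpl; rewrite Rmult_1_r, <- exp_plus; f_equal; field. }
  assert (0 < Rpower q (1/4)) by apply exp_pos.
  rewrite Hhalf; field; repeat split; try lra.
  apply Rgt_not_eq; nra.
Qed.

Theorem mainTheorem15 (q A B : R) (hq0 : 0 < q) (hq1 : q < 1)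
  (hA : is_qpoch_inf (q ^ 2) (q ^ 2) A)
  (hB : is_qpoch_inf q (q ^ 2) B) :
  infinite_sum
    (fun n : nat => (1 + q ^ (2 * n + 1)) * q ^ n / (1 - q ^ (2 * n + 1)) ^ 2)
    ((gosper_pi_q q A B) ^ 2 / ((1 - q ^ 2) ^ 2 * Rpower q (1/2))).
Proof.
  assert (Hq : 0 < q < 1) by lra.
  assert (HB : B <> 0).
  { apply Rgt_not_eq, (is_qpoch_inf_pos q (q^2)); [lra | split; nra | exact hB]. }
  rewrite gosper_pi_q_sq by assumption.
  apply (tannery_geometric (fun n => fin_term q ((q^2)^n)) _ (summand_kernel q 1 * (A / B)) q);
    [ exact Hq
    | intros n k; exact (fin_term_bound q Hq A B n k HB hA hB)
    | exact (fin_term_cv q Hq) |].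
  apply (Un_cv_ext (fin_prod q)); [intros n; symmetry; apply fin_sum_eq_fin_prod; exact Hq|].
  exact (fin_prod_cv q A B HB hA hB).
Qed.
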